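(* Let $\bar A=\{z\in\mathbb{C}:\operatorname{Re}z\ge0\}$. Let $Q_0$ be a function holomorphic in $\bar A$ and $Q_1$ a polynomial in one complex variable. If $Q_0(w)+vQ_1(w)\ne0$ for all $v,w\in\bar A$, then $Q_0(z)+Q_1'(z)\ne0$ for all $z\in\bar A$. *)

From Stdlib Require Import Reals.
From Coquelicot Require Import Coquelicot.
Open Scope R_scope.

Definition closed_rhp (z : C) : Prop := 0 <= Re z.

Definition holomorphic_on_closed_rhp (f : C -> C) : Prop :=
  exists U : C -> Prop, open U /\ (forall z, closed_rhp z -> U z) /\
    (forall z, U z -> @ex_derive C_AbsRing C_NormedModule f z).

Definition is_Cpoly (p : C -> C) : Prop :=
  exists (n : nat) (a : nat -> C),
    forall z : C, p z = sum_n (fun k => Cmult (a k) (pow_n z k)) n.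

From Stdlib Require Import Reals Lra Psatz.
From Coquelicot Require Import Coquelicot.
From mathcomp Require Import all_boot all_order all_algebra.
From mathcomp Require Import Rstruct complex.
Import Order.TTheory GRing.Theory Num.Theory.

(* Write Q1 = p for a polynomial p; only the continuity of Q0 on the closed
   right half-plane A is used.  Taking v = 0 shows Q0 <> 0 on A.  Suppose
   p = q (X - z)^m with z in A, and u is a direction such that z + t u lies
   in A for small t > 0.  If Q0(z) + u^m q(z) = 0, then at w = z + t u we have
   p(w) = t^m u^m q(w) with u^m q(w) close to -Q0(w), so v = -Q0(w)/p(w) has
   nonnegative real part and Q0(w) + v p(w) = 0, which is excluded.
   With m the multiplicity of a root r of p and u an m-th root of
   -Q0(r)/q(r), this shows that every root of p has Re r <= 0.  Now let z be
   in A.  If p(z) = 0, then p'(z) = q(z) and the case m = 1, u = 1 gives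
   Q0(z) + p'(z) <> 0.  Otherwise v = p'(z)/p(z) = sum_r 1/(z - r) has
   nonnegative real part and Q0(z) + v p(z) = Q0(z) + p'(z). *)

Section RealPart.
Context {F : numClosedFieldType}.
Local Open Scope ring_scope.
Implicit Types (x y : F) (p q : {poly F}).

Lemma Re_inv_ge0 x : 0 <= 'Re x -> 0 <= 'Re x^-1.
Proof. by move=> x0; rewrite ReV divr_ge0 // exprn_ge0. Qed.

Lemma Re_div_ge0 x r : 0 <= 'Re x -> 0 <= r -> 0 <= 'Re (x / r).
Proof. by move=> x0 r0; rewrite ReMr ?divr_ge0 ?Creal_ReP ?rpredV ?ger0_real. Qed.

Lemma Re_div_gt0 x y : `|x - y| < `|y| -> 0 < 'Re (x / y).
Proof.
have [-> | y0 lt_xy] := eqVneq y 0.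
  by rewrite normr0 => /(le_lt_trans (normr_ge0 _)); rewrite ltxx.
have -> : x / y = 1 - (y - x) / y by rewrite mulrBl divff // opprB addrC subrK.
rewrite raddfB /= (Creal_ReP 1 (real1 _)) subr_gt0.
apply: le_lt_trans (leif_Re_Creal _) _.
by rewrite normrM normfV ltr_pdivrMr ?normr_gt0 // mul1r distrC.
Qed.

Lemma logderivM p q x : p.[x] != 0 -> q.[x] != 0 ->
  (p * q)^`().[x] / (p * q).[x] = p^`().[x] / p.[x] + q^`().[x] / q.[x].
Proof.
move=> px qx; rewrite derivM hornerD !hornerM mulrDl invfM.
by rewrite mulrACA (divff qx) mulr1 mulrACA (divff px) mul1r.
Qed.

Lemma Re_logderiv_ge0 p x : (forall r, root p r -> 'Re r <= 'Re x) -> p.[x] != 0 ->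
  0 <= 'Re (p^`().[x] / p.[x]).
Proof.
elim: {p}(size p) {-2}p (leqnn (size p)) => [|n IHn] p sz_p Re_roots px.
  by move: sz_p px; rewrite leqn0 size_poly_eq0 => /eqP ->; rewrite horner0 eqxx.
have [/size1_polyC -> | /gtn_eqF/closed_rootP[r /factor_theorem[q p_eq]]] := leqP (size p) 1.
  by rewrite derivC horner0 mul0r raddf0 lexx.
have /andP[qx xr] : (q.[x] != 0) && (x - r != 0).
  by move: px; rewrite p_eq hornerM hornerXsubC mulf_eq0 negb_or.
have q0 : q != 0 by apply: contraNneq qx => ->; rewrite horner0.
move: sz_p Re_roots; rewrite p_eq size_Mmonic ?monicXsubC // size_XsubC addn2 => sz_q Re_roots.
have Re_roots_q r' : root q r' -> 'Re r' <= 'Re x.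
  by move=> qr'; rewrite Re_roots // rootM qr'.
rewrite logderivM ?hornerXsubC // derivXsubC hornerC mul1r raddfD addr_ge0 //.
  exact: IHn.
by rewrite Re_inv_ge0 // raddfB subr_ge0 Re_roots // rootM root_XsubC eqxx orbT.
Qed.
End RealPart.

Definition toRi (z : C) : R[i] := Complex z.1 z.2.
Definition ofRi (x : R[i]) : C := (complex.Re x, complex.Im x).

Lemma toRiK : cancel toRi ofRi. Proof. by case. Qed.
Lemma ofRiK : cancel ofRi toRi. Proof. by case. Qed.
Lemma toRi_inj : injective toRi. Proof. exact: can_inj toRiK. Qed.

Section Bridge.
Local Open Scope ring_scope.
Implicit Types (x y z : C).

Lemma toRiD x y : toRi (Cplus x y) = toRi x + toRi y. Proof. by []. Qed.
Lemma toRiM x y : toRi (Cmult x y) = toRi x * toRi y. Proof. by []. Qed.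
Lemma toRi_RtoC r : toRi (RtoC r) = r%:C%C. Proof. by []. Qed.
Lemma toRi_pow_n z n : toRi (pow_n z n) = toRi z ^+ n.
Proof. by elim: n => //= n IHn; rewrite exprS -IHn. Qed.
Lemma toRi_sum_n (f : nat -> C) n : toRi (sum_n f n) = \sum_(k < n.+1) toRi (f k).
Proof.
elim: n => [|n IHn]; first by rewrite sum_O big_ord1.
by rewrite sum_Sn big_ord_recr /= -IHn.
Qed.
Lemma Cmod_toRi z : (Cmod z)%:C%C = `|toRi z|.
Proof. by rewrite normc_def /Cmod RsqrtE !RpowE. Qed.
Lemma closed_rhp_toRi z : closed_rhp z <-> 0 <= 'Re (toRi z).
Proof. by rewrite -complexRe ler0c; split => /RleP. Qed.
End Bridge.

Definition Chorner (q : {poly R[i]}) (w : C) : C := ofRi q.[toRi w]%R.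

(* [C_NormedModule] and [AbsRing_NormedModule C_AbsRing] differ only in their
   uniform structure, which [is_derive] does not see; the product rule
   [is_derive_mult] is stated for the latter. *)
Lemma is_derive_C_NormedModule (f : C -> C) z l :
  @is_derive C_AbsRing (AbsRing_NormedModule C_AbsRing) f z l -> is_derive f z l.
Proof. by case=> [[? ? [M ?]] ?]; split => //; split => //; exists M. Qed.

Lemma is_derive_Chorner q z : is_derive (Chorner q) z (Chorner q^`() z).
Proof.
apply: is_derive_C_NormedModule.
elim/poly_ind: q => [|q c IHq].
  rewrite /Chorner deriv0 horner0.
  apply: (is_derive_ext (fun _ => zero)) => [w|]; first by rewrite horner0.
  exact: (is_derive_const (V := AbsRing_NormedModule C_AbsRing)).
have := is_derive_plus _ _ _ _ _ (is_derive_mult _ _ _ _ _ IHq (is_derive_id z) Cmult_comm)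
  (is_derive_const (V := AbsRing_NormedModule C_AbsRing) (ofRi c) z).
have -> : Chorner (q * 'X + c%:P)^`() z
    = Cplus (Cplus (Cmult (Chorner q^`() z) z) (Cmult (Chorner q z) (RtoC 1))) (RtoC 0).
  apply: toRi_inj; rewrite derivMXaddC /Chorner !toRiD !toRiM !ofRiK hornerD hornerM hornerX.
  by rewrite addrC !toRi_RtoC rmorph1 rmorph0 mulr1 addr0.
apply: is_derive_ext => w.
by apply: toRi_inj; rewrite /Chorner toRiD toRiM !ofRiK hornerMXaddC.
Qed.

Lemma is_Cpoly_Chorner (f : C -> C) : is_Cpoly f -> exists q, forall w, f w = Chorner q w.
Proof.
case=> n [a fE]; exists (\poly_(k < n.+1) toRi (a k))%R => w.
apply: toRi_inj; rewrite fE /Chorner ofRiK toRi_sum_n horner_poly.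
by apply: eq_bigr => k _; rewrite toRiM toRi_pow_n.
Qed.

Lemma locally_Cmod_add_lt {A B : C -> C} {z} :
  @continuous (AbsRing_UniformSpace C_AbsRing) C_NormedModule A z ->
  @continuous (AbsRing_UniformSpace C_AbsRing) C_NormedModule B z ->
  Cplus (A z) (B z) = 0 -> B z <> 0 ->
  @locally (AbsRing_UniformSpace C_AbsRing) z (fun w => Cmod (Cplus (A w) (B w)) < Cmod (B w)).
Proof.
move=> A_cont B_cont ABz Bz.
have eps_gt0 : 0 < Cmod (B z) / 2 by apply: Rdiv_lt_0_compat; [exact/Cmod_gt_0 | lra].
have /filterlim_locally_ball_norm AB_near := continuous_plus _ _ _ A_cont B_cont.
have /filterlim_locally_ball_norm B_near := B_cont.
have ABz' : plus (A z) (B z) = zero := ABz.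
move: (AB_near (mkposreal _ eps_gt0)) => /(filter_and _ _) /(_ (B_near (mkposreal _ eps_gt0))).
apply: filter_imp => w []; rewrite /ball_norm ABz' minus_zero_r /=.
have := Rle_abs (norm (B z) - norm (B w)).
rewrite Rabs_minus_sym => /Rle_trans /(_ (norm_triangle_inv _ _)).
change norm with Cmod; change (plus (A w) (B w)) with (Cplus (A w) (B w)); lra.
Qed.

Lemma locally_ray_rhp {z u : C} {P : C -> Prop} :
  @locally (AbsRing_UniformSpace C_AbsRing) z P -> closed_rhp z -> (0 < z.1 \/ closed_rhp u) ->
  exists2 t, 0 < t & closed_rhp (Cplus z (Cmult (RtoC t) u)) /\ P (Cplus z (Cmult (RtoC t) u)).
Proof.
case=> d near_z z0 dir.
have [r r0 [rd rz]] : exists2 r, 0 < r & r <= d /\ (r <= z.1 \/ 0 <= u.1).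
  case: dir => [z1|u1]; last by exists d; [exact: cond_pos | split; [lra | right]].
  exists (Rmin d z.1); first exact: Rmin_pos (cond_pos d) z1.
  by split; [apply: Rmin_l | left; apply: Rmin_r].
have mod_u := Cmod_ge_0 u.
have [t t0 tr] : exists2 t, 0 < t & t * (Cmod u + 1) = r.
  by exists (r / (Cmod u + 1)); [apply: Rdiv_lt_0_compat | field]; lra.
have Re_u_ge : - Cmod u <= u.1 by have /Rabs_le_between [] := re_le_Cmod u.
exists t => //; split.
- move: z0; rewrite /closed_rhp /Complex.Re /= => ?; case: rz => ?; nra.
- apply: near_z; rewrite /ball /= /AbsRing_ball /abs /=.
  have -> : minus (Cplus z (Cmult t u)) z = Cmult t u.
    by rewrite /minus plus_comm plus_assoc plus_opp_l plus_zero_l.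
  rewrite Cmod_mult Cmod_R Rabs_pos_eq; nra.
Qed.

Section Pencil.
Local Open Scope ring_scope.
Variables (Q0 : C -> C) (p : {poly R[i]}).
Hypothesis Q0_cont :
  forall z, closed_rhp z -> @continuous (AbsRing_UniformSpace C_AbsRing) C_NormedModule Q0 z.
Hypothesis Q0_add_mul_p_neq0 :
  forall (v : R[i]) w, 0 <= 'Re v -> closed_rhp w -> toRi (Q0 w) + v * p.[toRi w] != 0.

Lemma Q0_neq0 w : closed_rhp w -> toRi (Q0 w) != 0.
Proof. by move=> wA; have := Q0_add_mul_p_neq0 0 w; rewrite raddf0 mul0r addr0; apply. Qed.

Lemma Q0_add_ray_neq0 z u m q : closed_rhp z -> (Rlt 0 z.1 \/ closed_rhp u) ->
  p = q * ('X - (toRi z)%:P) ^+ m -> toRi (Q0 z) + toRi u ^+ m * q.[toRi z] != 0.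
Proof.
move=> zA dir p_eq; apply/eqP => cancel_z.
pose b := (toRi u ^+ m)%:P * q.
have b_cont := ex_derive_continuous _ _ (ex_intro _ _ (is_derive_Chorner b z)).
have bE w : toRi (Chorner b w) = toRi u ^+ m * q.[toRi w] by rewrite /Chorner ofRiK hornerCM.
have Q0bz : Cplus (Q0 z) (Chorner b z) = 0.
  by apply: toRi_inj; rewrite toRiD bE cancel_z toRi_RtoC rmorph0.
have bz : Chorner b z <> 0.
  move=> bz0; move: cancel_z (Q0_neq0 z zA); rewrite -bE bz0 toRi_RtoC rmorph0 addr0 => ->.
  by rewrite eqxx.
have [t t0 [wA]] := locally_ray_rhp (locally_Cmod_add_lt (Q0_cont z zA) b_cont Q0bz bz) zA dir.
set w := Cplus z (Cmult t u).
move=> /RltP; rewrite -ltcR !Cmod_toRi toRiD bE.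
set a := toRi (Q0 w); set c := _ * q.[_] => lt_ac.
have Re_ac : 0 < 'Re (- a / c) by apply: Re_div_gt0; rewrite -opprD normrN.
have c0 : c != 0 by apply: contraTneq Re_ac => ->; rewrite invr0 mulr0 raddf0 ltxx.
pose T : R[i] := (t%:C ^+ m)%C.
have T_gt0 : 0 < T by rewrite exprn_gt0 // ltcR; apply/RltP.
have pw : p.[toRi w] = T * c.
  rewrite p_eq hornerM horner_exp hornerXsubC toRiD toRiM toRi_RtoC.
  by rewrite addrAC subrr add0r exprMn mulrC -mulrA.
have v_ge0 : 0 <= 'Re (- a / c / T) by apply: Re_div_ge0; apply: ltW.
have := Q0_add_mul_p_neq0 _ _ v_ge0 wA.
by rewrite pw mulrA (divfK (lt0r_neq0 T_gt0)) (divfK c0) addrN eqxx.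
Qed.

Lemma root_Re_le0 r : p != 0 -> root p r -> 'Re r <= 0.
Proof.
move=> p0 pr; rewrite real_leNgt ?Creal_Re //; apply/negP => Re_r.
have [m [q /implyP/(_ p0) qr p_eq]] := multiplicity_XsubC p r.
have m_gt0 : (0 < m)%N.
  by rewrite lt0n; apply: contraNneq qr => m0; move: pr; rewrite p_eq m0 expr0 mulr1.
have rA : closed_rhp (ofRi r) by apply/closed_rhp_toRi; rewrite ofRiK ltW.
have r1 : Rlt 0 (ofRi r).1 by apply/RltP; rewrite -ltcR complexRe.
pose u := m.-root (- toRi (Q0 (ofRi r)) / q.[r]).
have := Q0_add_ray_neq0 (ofRi r) (ofRi u) m q rA (or_introl r1).
by rewrite !ofRiK -p_eq => /(_ erefl); rewrite rootCK // divfK // addrN eqxx.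
Qed.

Lemma Q0_add_deriv_neq0 z : closed_rhp z -> toRi (Q0 z) + p^`().[toRi z] != 0.
Proof.
move=> zA; have [/factor_theorem [q p_eq] | pz] := boolP (root p (toRi z)).
  have := Q0_add_ray_neq0 z (RtoC 1) 1 q zA (or_intror Rle_0_1).
  rewrite expr1 -p_eq => /(_ erefl).
  rewrite p_eq derivM derivXsubC hornerD !hornerM hornerXsubC subrr mulr0 add0r hornerC mulr1.
  by rewrite toRi_RtoC rmorph1 mul1r.
have p0 : p != 0 by apply: contraNneq pz => ->; rewrite root0.
have Re_v : 0 <= 'Re (p^`().[toRi z] / p.[toRi z]).
  apply: Re_logderiv_ge0 pz => r pr.
  by rewrite (le_trans (root_Re_le0 _ p0 pr)) // -closed_rhp_toRi.
by have := Q0_add_mul_p_neq0 _ _ Re_v zA; rewrite divfK.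
Qed.
End Pencil.

Theorem lemma2p1 (Q0 Q1 : C -> C) :
  holomorphic_on_closed_rhp Q0 ->
  is_Cpoly Q1 ->
  (forall v w : C, closed_rhp v -> closed_rhp w -> Cplus (Q0 w) (Cmult v (Q1 w)) <> RtoC 0) ->
  forall (z d : C), closed_rhp z ->
    @is_derive C_AbsRing C_NormedModule Q1 z d ->
    Cplus (Q0 z) d <> RtoC 0.
Proof.
move=> [U [_ [rhp_U Q0_diff]]] /is_Cpoly_Chorner [p Q1E] Q0_add_Q1 z d zA Q1_d.
have Q0_cont w (wA : closed_rhp w) := ex_derive_continuous _ _ (Q0_diff w (rhp_U w wA)).
have Q0_add_p (v : R[i]) w :
    (0 <= 'Re v)%R -> closed_rhp w -> (toRi (Q0 w) + v * p.[toRi w] != 0)%R.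
  move=> v0 wA; apply/eqP => eq0; apply: (Q0_add_Q1 (ofRi v) w _ wA).
    by apply/closed_rhp_toRi; rewrite ofRiK.
  by apply: toRi_inj; rewrite toRiD toRiM Q1E /Chorner !ofRiK eq0.
have -> : d = Chorner p^`() z.
  rewrite -(is_C_derive_unique _ _ _ Q1_d); apply: is_C_derive_unique.
  by apply: is_derive_ext (is_derive_Chorner p z) => w; rewrite Q1E.
move/(f_equal toRi); rewrite toRiD /Chorner ofRiK toRi_RtoC rmorph0; apply/eqP.
exact: Q0_add_deriv_neq0 Q0_cont Q0_add_p z zA.
Qed.
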